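(* Let $x,y\in\mathbb{H}^2$ with $d(x,\partial\mathbb{H}^2)=d(y,\partial\mathbb{H}^2)=d$. (1) If $|x-y|>2d$, then $\tilde\tau_{\mathbb{H}^2}(x,y)=\log\Big(1+\sqrt{\tfrac{|x-y|}{d}}\Big)$. (2) If $|x-y|\le 2d$, then $\tilde\tau_{\mathbb{H}^2}(x,y)=\log\Big(1+\tfrac{2|x-y|}{\sqrt{4d^2+|x-y|^2}}\Big)$.
   Context: $\mathbb{H}^n=\{(x_1,\dots,x_n)\in\mathbb{R}^n: x_n>0\}$ is the upper half space, with boundary $\partial\mathbb{H}^n=\{x_n=0\}$ (in $\mathbb{R}^n$); $d(x,\partial D)$ is the Euclidean distance from $x$ to $\partial D$. For a proper subdomain $D\subsetneq\mathbb{R}^n$ and $x,y\in D$, $\tilde\tau_D(x,y)=\log\big(1+\sup_{p\in\partial D}\frac{|x-y|}{\sqrt{|x-p||y-p|}}\big)$ (the scale invariant Cassinian metric). *)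

From Stdlib Require Import Reals Lra ClassicalEpsilon.
Open Scope R_scope.

Definition pt := (R * R)%type.

Definition dist2 (x y : pt) : R :=
  sqrt ((fst x - fst y)^2 + (snd x - snd y)^2).

(* Upper half plane H^2 = {x_2 > 0}; its boundary in R^2 is {x_2 = 0}. *)
Definition in_H2 (x : pt) : Prop := 0 < snd x.
Definition in_bdry_H2 (p : pt) : Prop := snd p = 0.

(* Supremum of a set of reals (classical choice of a least upper bound;
   an arbitrary value 0 if no lub exists). *)
Definition Rsup (E : R -> Prop) : R :=
  match excluded_middle_informative (exists l, is_lub E l) with
  | left H => proj1_sig (constructive_indefinite_description _ H)
  | right _ => 0
  end.

Definition Rinf (E : R -> Prop) : R := - Rsup (fun r => E (- r)).

Definition dist_bdry_H2 (x : pt) : R :=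
  Rinf (fun r => exists p : pt, in_bdry_H2 p /\ r = dist2 x p).

Definition tau_H2 (x y : pt) : R :=
  ln (1 + Rsup (fun r => exists p : pt, in_bdry_H2 p /\
         r = dist2 x y / sqrt (dist2 x p * dist2 y p))).

(** Every boundary point of [H^2] is [(t, 0)], so the supremum defining [tau_H2 x y]
    is [|x - y| / m^(1/4)], where [m] is the minimum over [t] of the quartic
    [((x1 - t)^2 + x2^2) ((y1 - t)^2 + y2^2)].  For two points [(a, d)] and [(b, d)]
    at the same height, put [s = t - (a + b)/2] and [h = (a - b)/2]; the quartic is
    [(s^2 - h^2 + d^2)^2 + 4 h^2 d^2 = s^4 + 2 s^2 (d^2 - h^2) + (h^2 + d^2)^2].
    When [h > d] the first form is minimal at [s^2 = h^2 - d^2], with value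
    [|x - y|^2 d^2]; when [h <= d] the second form is minimal at [s = 0], with value
    [(|x - y|^2/4 + d^2)^2]. *)
From Stdlib Require Import Reals Lra Psatz ClassicalEpsilon.
Open Scope R_scope.

Lemma Rsup_is_lub (E : R -> Prop) (l : R) : is_lub E l -> Rsup E = l.
Proof.
  intros Hl. unfold Rsup.
  destruct (excluded_middle_informative _) as [Hex | Hnex].
  - destruct (constructive_indefinite_description _ Hex) as [l' Hl']; simpl.
    destruct Hl as [Hub Hleast], Hl' as [Hub' Hleast'].
    apply Rle_antisym; auto.
  - exfalso; apply Hnex; eauto.
Qed.

Lemma dist_bdry_H2_eq (x : pt) : in_H2 x -> dist_bdry_H2 x = snd x.
Proof.
  destruct x as [x1 x2]; unfold in_H2; cbn [fst snd]; intros Hx.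
  unfold dist_bdry_H2, Rinf. rewrite (Rsup_is_lub _ (- x2)); [ring |]. split.
  - intros r [[p1 p2] [Hp Hr]]. unfold in_bdry_H2 in Hp; cbn [fst snd] in Hp; subst p2.
    unfold dist2 in Hr; cbn [fst snd] in Hr.
    assert (Hle : sqrt (x2 ^ 2) <= sqrt ((x1 - p1) ^ 2 + (x2 - 0) ^ 2)).
    { apply sqrt_le_1_alt. pose proof (pow2_ge_0 (x1 - p1)). nra. }
    rewrite sqrt_pow2 in Hle by lra. lra.
  - intros u Hu. apply Hu. exists (x1, 0). split; [reflexivity |].
    unfold dist2; cbn [fst snd].
    replace ((x1 - x1) ^ 2 + (x2 - 0) ^ 2) with (x2 ^ 2) by ring.
    rewrite sqrt_pow2; lra.
Qed.

Lemma dist2_same_height (a b d : R) : dist2 (a, d) (b, d) = Rabs (a - b).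
Proof.
  unfold dist2; cbn [fst snd].
  replace ((a - b) ^ 2 + (d - d) ^ 2) with ((a - b) ^ 2) by ring.
  rewrite <- Rsqr_pow2; apply sqrt_Rsqr_abs.
Qed.

Definition bdry_prod (x y : pt) (t : R) : R :=
  ((fst x - t) ^ 2 + snd x ^ 2) * ((fst y - t) ^ 2 + snd y ^ 2).

Lemma dist2_bdry_mult (x y : pt) (t : R) :
  dist2 x (t, 0) * dist2 y (t, 0) = sqrt (bdry_prod x y t).
Proof.
  unfold dist2, bdry_prod; cbn [fst snd].
  replace (snd x - 0) with (snd x) by ring.
  replace (snd y - 0) with (snd y) by ring.
  pose proof (pow2_ge_0 (fst x - t)); pose proof (pow2_ge_0 (snd x)).
  pose proof (pow2_ge_0 (fst y - t)); pose proof (pow2_ge_0 (snd y)).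
  rewrite sqrt_mult; lra.
Qed.

Lemma tau_H2_bdry_prod_min (x y : pt) (m : R) :
  0 < m -> (forall t, m <= bdry_prod x y t) -> (exists t, bdry_prod x y t = m) ->
  tau_H2 x y = ln (1 + dist2 x y / sqrt (sqrt m)).
Proof.
  intros Hm Hmin [t0 Ht0]. unfold tau_H2.
  rewrite (Rsup_is_lub _ (dist2 x y / sqrt (sqrt m))); [reflexivity |]. split.
  - intros r [[t p2] [Hp ->]]. unfold in_bdry_H2 in Hp; cbn [fst snd] in Hp; subst p2.
    rewrite dist2_bdry_mult.
    assert (Hpos : 0 < sqrt (sqrt m)) by (apply sqrt_lt_R0, sqrt_lt_R0; lra).
    assert (Hle : sqrt (sqrt m) <= sqrt (sqrt (bdry_prod x y t)))
      by (apply sqrt_le_1_alt, sqrt_le_1_alt, Hmin).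
    apply Rmult_le_compat_l; [unfold dist2; apply sqrt_pos |].
    apply Rinv_le_contravar; assumption.
  - intros u Hu. apply Hu. exists (t0, 0). split; [reflexivity |].
    rewrite dist2_bdry_mult, Ht0. reflexivity.
Qed.

Lemma bdry_prod_ge_far (a b d t : R) :
  ((a - b) * d) ^ 2 <= bdry_prod (a, d) (b, d) t.
Proof.
  unfold bdry_prod; cbn [fst snd].
  pose proof (pow2_ge_0 ((t - (a + b) / 2) ^ 2 - (a - b) ^ 2 / 4 + d ^ 2)).
  assert (((a - t) ^ 2 + d ^ 2) * ((b - t) ^ 2 + d ^ 2) - ((a - b) * d) ^ 2
          = ((t - (a + b) / 2) ^ 2 - (a - b) ^ 2 / 4 + d ^ 2) ^ 2) by field.
  lra.
Qed.

Lemma bdry_prod_attains_far (a b d : R) :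
  4 * d ^ 2 <= (a - b) ^ 2 ->
  exists t, bdry_prod (a, d) (b, d) t = ((a - b) * d) ^ 2.
Proof.
  intros Hfar.
  set (s := sqrt ((a - b) ^ 2 / 4 - d ^ 2)).
  assert (Hs : s ^ 2 = (a - b) ^ 2 / 4 - d ^ 2) by (apply pow2_sqrt; lra).
  exists ((a + b) / 2 + s). unfold bdry_prod; cbn [fst snd].
  assert (((a - ((a + b) / 2 + s)) ^ 2 + d ^ 2) * ((b - ((a + b) / 2 + s)) ^ 2 + d ^ 2)
          - ((a - b) * d) ^ 2 = (s ^ 2 - (a - b) ^ 2 / 4 + d ^ 2) ^ 2) by field.
  rewrite Hs in *. nra.
Qed.

Lemma bdry_prod_ge_near (a b d t : R) :
  (a - b) ^ 2 <= 4 * d ^ 2 ->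
  ((a - b) ^ 2 / 4 + d ^ 2) ^ 2 <= bdry_prod (a, d) (b, d) t.
Proof.
  intros Hnear. unfold bdry_prod; cbn [fst snd].
  set (s := t - (a + b) / 2).
  assert (((a - t) ^ 2 + d ^ 2) * ((b - t) ^ 2 + d ^ 2) - ((a - b) ^ 2 / 4 + d ^ 2) ^ 2
          = (s ^ 2) ^ 2 + 2 * s ^ 2 * (d ^ 2 - (a - b) ^ 2 / 4)) by (unfold s; field).
  pose proof (pow2_ge_0 s); pose proof (pow2_ge_0 (s ^ 2)).
  assert (0 <= s ^ 2 * (d ^ 2 - (a - b) ^ 2 / 4)) by (apply Rmult_le_pos; lra).
  lra.
Qed.

Lemma bdry_prod_midpoint (a b d : R) :
  bdry_prod (a, d) (b, d) ((a + b) / 2) = ((a - b) ^ 2 / 4 + d ^ 2) ^ 2.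
Proof. unfold bdry_prod; cbn [fst snd]; field. Qed.

Lemma div_sqrt_mult (L d : R) : 0 < L -> 0 < d -> L / sqrt (L * d) = sqrt (L / d).
Proof.
  intros HL Hd.
  assert (Hsd : 0 < sqrt d) by (apply sqrt_lt_R0; lra).
  assert (HsL : 0 < sqrt L) by (apply sqrt_lt_R0; lra).
  rewrite sqrt_mult, sqrt_div by lra.
  rewrite <- (sqrt_sqrt L) at 1 by lra.
  field; lra.
Qed.

Lemma sqrt_4_mult (u : R) : 0 <= u -> sqrt (4 * u) = 2 * sqrt u.
Proof.
  intros Hu. rewrite sqrt_mult by lra.
  replace 4 with (2 ^ 2) by ring. rewrite sqrt_pow2; lra.
Qed.

Theorem lemma3p9 (x y : pt) (d : R) :
  in_H2 x -> in_H2 y ->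
  dist_bdry_H2 x = d -> dist_bdry_H2 y = d ->
  (dist2 x y > 2 * d ->
     tau_H2 x y = ln (1 + sqrt (dist2 x y / d))) /\
  (dist2 x y <= 2 * d ->
     tau_H2 x y = ln (1 + 2 * dist2 x y / sqrt (4 * d ^ 2 + (dist2 x y) ^ 2))).
Proof.
  intros Hx Hy Hdx Hdy.
  rewrite dist_bdry_H2_eq in Hdx, Hdy by assumption.
  destruct x as [a dx], y as [b dy]; unfold in_H2 in *; cbn [fst snd] in *; subst dx dy.
  set (L := dist2 (a, d) (b, d)).
  assert (HL : 0 <= L) by apply sqrt_pos.
  assert (HL2 : (a - b) ^ 2 = L ^ 2)
    by (unfold L; rewrite dist2_same_height, pow2_abs; reflexivity).
  split; intros Hcase.
  - rewrite (tau_H2_bdry_prod_min _ _ (((a - b) * d) ^ 2)).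
    + rewrite Rpow_mult_distr, HL2, <- Rpow_mult_distr, sqrt_pow2 by nra.
      rewrite div_sqrt_mult by lra. reflexivity.
    + rewrite Rpow_mult_distr, HL2. apply Rmult_lt_0_compat; apply pow_lt; lra.
    + apply bdry_prod_ge_far.
    + apply bdry_prod_attains_far. nra.
  - rewrite (tau_H2_bdry_prod_min _ _ (((a - b) ^ 2 / 4 + d ^ 2) ^ 2)).
    + rewrite HL2, sqrt_pow2 by nra.
      replace (4 * d ^ 2 + L ^ 2) with (4 * (L ^ 2 / 4 + d ^ 2)) by field.
      rewrite sqrt_4_mult by nra. fold L. do 2 f_equal.
      field. apply Rgt_not_eq, sqrt_lt_R0. nra.
    + apply pow_lt. pose proof (pow2_ge_0 (a - b)). pose proof (pow_lt d 2 Hx). lra.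
    + intros t. apply bdry_prod_ge_near. nra.
    + exists ((a + b) / 2). apply bdry_prod_midpoint.
Qed.
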